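(* Let $T$ be a CPTP map and $\mathcal{H}_S$ an invariant subspace with orthogonal projection $\Pi_S$. Then $\mathcal{H}_S$ is GAS if and only if the sequence of subspaces $\mathrm{supp}(T^{*n}(\Pi_S))$, $n=0,1,2,\dots$, is strictly increasing until it equals $\mathcal{H}$ (i.e. there is $N$ such that $\mathrm{supp}(T^{*n}(\Pi_S))\subsetneq\mathrm{supp}(T^{*(n+1)}(\Pi_S))$ for $n<N$ and $\mathrm{supp}(T^{*N}(\Pi_S))=\mathcal{H}$).
   Context: $\mathcal{H}$ is a finite-dimensional complex Hilbert space; $T$ is CPTP: $T(\rho)=\sum_kM_k\rho M_k^\dagger$, $\sum_kM_k^\dagger M_k=I$, with dual $T^*(A)=\sum_kM_k^\dagger AM_k$, $T^{*0}=\mathrm{id}$. $\mathrm{supp}(X)=(\ker X)^\perp$. $\mathcal{H}_S$ is invariant if $\rho\ge0$, $\mathrm{supp}(\rho)\subseteq\mathcal{H}_S$ implies $\mathrm{supp}(T(\rho))\subseteq\mathcal{H}_S$; an invariant $\mathcal{H}_S$ is GAS if $\lim_n\|T^n(\rho)-\Pi_ST^n(\rho)\Pi_S\|=0$ for every density operator $\rho$. *)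

(* The finite-dimensional complex Hilbert space H is C^n
   (column vectors), where C is an Archimedean algebraically closed numeric
   field (e.g. algC).  Subspaces of H are represented (mxalgebra style) by the
   row space of a matrix whose rows are the transposes of spanning vectors. *)
From HB Require Import structures.
From mathcomp Require Import all_boot all_order all_algebra.
Set Implicit Arguments. Unset Strict Implicit. Unset Printing Implicit Defensive.
Import Order.TTheory GRing.Theory Num.Theory.
Local Open Scope ring_scope.

Definition adjmx (C : archiClosedFieldType) (m p : nat) (A : 'M[C]_(m, p))
  : 'M[C]_(p, m) := (map_mx Num.conj A)^T.

Definition psd (C : archiClosedFieldType) (n : nat) (A : 'M[C]_n) : Prop :=
  adjmx A = A /\ forall v : 'cV[C]_n, 0 <= (adjmx v *m A *m v) 0 0.

Definition density (C : archiClosedFieldType) (n : nat) (rho : 'M[C]_n) : Prop :=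
  psd rho /\ \tr rho = 1.

(* ker X = {v | X v = 0}, as the row space of the transposes v^T *)
Definition kerS (C : archiClosedFieldType) (n : nat) (X : 'M[C]_n) : 'M[C]_n :=
  kermx X^T.

(* orthogonal complement of the subspace (row space) U w.r.t. <u,w> = sum u_i conj(w_i) *)
Definition perp (C : archiClosedFieldType) (n : nat) (U : 'M[C]_n) : 'M[C]_n :=
  kermx (map_mx Num.conj U)^T.

Definition supp (C : archiClosedFieldType) (n : nat) (X : 'M[C]_n) : 'M[C]_n :=
  perp (kerS X).

Definition kraus_op (C : archiClosedFieldType) (n k : nat) (M : 'I_k -> 'M[C]_n)
  (rho : 'M[C]_n) : 'M[C]_n := \sum_(i < k) M i *m rho *m adjmx (M i).

Definition kraus_dual (C : archiClosedFieldType) (n k : nat) (M : 'I_k -> 'M[C]_n)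
  (A : 'M[C]_n) : 'M[C]_n := \sum_(i < k) adjmx (M i) *m A *m M i.

(* trace preservation condition sum_k M_k^dagger M_k = I (complete positivity
   is automatic for a Kraus form) *)
Definition cptp (C : archiClosedFieldType) (n k : nat) (M : 'I_k -> 'M[C]_n) : Prop :=
  \sum_(i < k) adjmx (M i) *m M i = 1%:M.

Definition orth_proj (C : archiClosedFieldType) (n : nat) (S P : 'M[C]_n) : Prop :=
  P *m P = P /\ adjmx P = P /\ (P^T == S)%MS.

Definition invariant_subspace (C : archiClosedFieldType) (n k : nat) (M : 'I_k -> 'M[C]_n)
  (S : 'M[C]_n) : Prop :=
  forall rho : 'M[C]_n, psd rho -> (supp rho <= S)%MS ->
    (supp (kraus_op M rho) <= S)%MS.

Definition hsnorm (C : archiClosedFieldType) (n : nat) (A : 'M[C]_n) : C :=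
  sqrtC (\sum_(i < n) \sum_(j < n) `|A i j| ^+ 2).

Definition GAS (C : archiClosedFieldType) (n k : nat) (M : 'I_k -> 'M[C]_n)
  (P : 'M[C]_n) : Prop :=
  forall rho : 'M[C]_n, density rho ->
    forall eps : C, 0 < eps -> exists N : nat, forall m : nat, (N <= m)%N ->
      hsnorm (iter m (kraus_op M) rho - P *m iter m (kraus_op M) rho *m P) < eps.

From HB Require Import structures.
From mathcomp Require Import all_boot all_order all_algebra.
Set Implicit Arguments. Unset Strict Implicit. Unset Printing Implicit Defensive.
Import Order.TTheory GRing.Theory Num.Theory.
Local Open Scope ring_scope.

(* Write [A_m = T*^m(P)] and [Q = 1 - P].  Since the [A_m] are psd,
   [ker A_(m+1) = {v | M_i v \in ker A_m for all i}]; invariance of [S] gives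
   [Q M_i P = 0] for every Kraus operator, hence [ker A_1 <= ker A_0].
   So the supports of the [A_m] increase, and once two consecutive ones agree
   the chain is constant; by a rank count it is constant from step [n].
   By duality [tr (Q T^m rho) = tr (T*^m(Q) rho)] with [T*^m(Q) = 1 - A_m],
   and [tr (Q sigma)] controls the distance of a state [sigma] to [S].
   If [A_n] is invertible then [A_n >= c > 0], so [Q T*^n(Q) Q <= (1 - c) Q]
   and [tr (Q T^m rho)] decays geometrically: [S] is GAS.  Otherwise a nonzero
   [w] in every [ker A_m] yields the state [w w^*/|w|^2] whose evolution never
   puts any weight on [S]. *)

Section Adjoint.
Variable C : archiClosedFieldType.

Lemma adjmxE m p (A : 'M[C]_(m, p)) i j : adjmx A i j = (A j i)^*.
Proof. by rewrite /adjmx !mxE. Qed.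

Lemma adjmxK m p (A : 'M[C]_(m, p)) : adjmx (adjmx A) = A.
Proof. by apply/matrixP=> i j; rewrite !adjmxE conjCK. Qed.

Lemma adjmxM m p r (A : 'M[C]_(m, p)) (B : 'M[C]_(p, r)) :
  adjmx (A *m B) = adjmx B *m adjmx A.
Proof. by rewrite /adjmx map_mxM trmx_mul. Qed.

Lemma adjmxD m p (A B : 'M[C]_(m, p)) : adjmx (A + B) = adjmx A + adjmx B.
Proof. by apply/matrixP=> i j; rewrite !mxE rmorphD. Qed.

Lemma adjmxN m p (A : 'M[C]_(m, p)) : adjmx (- A) = - adjmx A.
Proof. by apply/matrixP=> i j; rewrite !mxE rmorphN. Qed.

Lemma adjmxB m p (A B : 'M[C]_(m, p)) : adjmx (A - B) = adjmx A - adjmx B.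
Proof. by rewrite adjmxD adjmxN. Qed.

Lemma adjmxZ m p a (A : 'M[C]_(m, p)) : adjmx (a *: A) = a^* *: adjmx A.
Proof. by apply/matrixP=> i j; rewrite !mxE rmorphM. Qed.

Lemma adjmx_sum m p I (r : seq I) (F : I -> 'M[C]_(m, p)) :
  adjmx (\sum_(i <- r) F i) = \sum_(i <- r) adjmx (F i).
Proof.
apply/matrixP=> i j; rewrite !mxE !summxE rmorph_sum.
by apply: eq_bigr => l _; rewrite !mxE.
Qed.

Lemma adjmx1 m : adjmx (1%:M : 'M[C]_m) = 1%:M.
Proof.
by apply/matrixP=> i j; rewrite !mxE eq_sym; case: (_ == _); rewrite ?conjC1 ?conjC0.
Qed.

Lemma adjmx_delta m p (i : 'I_m) (j : 'I_p) :
  adjmx (delta_mx i j : 'M[C]_(m, p)) = delta_mx j i.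
Proof.
by apply/matrixP=> a b; rewrite !mxE; case: (_ == _); case: (_ == _); rewrite /= ?conjC1 ?conjC0.
Qed.

Lemma adjmx_tr m p (A : 'M[C]_(m, p)) : adjmx A = map_mx Num.conj A^T.
Proof. by rewrite /adjmx map_trmx. Qed.

End Adjoint.

Section QuadraticForm.
Variable C : archiClosedFieldType.

Definition qform n (A : 'M[C]_n) (v : 'cV[C]_n) : C := (adjmx v *m A *m v) 0 0.
Definition sqnorm n (v : 'cV[C]_n) : C := (adjmx v *m v) 0 0.

Lemma sqnormE n (v : 'cV[C]_n) : sqnorm v = \sum_i `|v i 0| ^+ 2.
Proof. by rewrite /sqnorm !mxE; apply: eq_bigr => i _; rewrite adjmxE normCKC. Qed.

Lemma sqnorm_ge0 n (v : 'cV[C]_n) : 0 <= sqnorm v.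
Proof. by rewrite sqnormE; apply: sumr_ge0 => i _; rewrite exprn_ge0. Qed.

Lemma sqnorm_eq0 n (v : 'cV[C]_n) : sqnorm v = 0 -> v = 0.
Proof.
rewrite sqnormE => /eqP; rewrite psumr_eq0 => [/allP vi0|i _]; last by rewrite exprn_ge0.
apply/matrixP=> i j; rewrite ord1 mxE; have := vi0 i (mem_index_enum i).
by rewrite implyTb sqrf_eq0 normr_eq0 => /eqP.
Qed.

Lemma sqnorm_delta n (i : 'I_n) : sqnorm (delta_mx i 0 : 'cV[C]_n) = 1.
Proof.
rewrite sqnormE (bigD1 i) //= big1 ?addr0 => [|j /negbTE ji].
  by rewrite mxE !eqxx normr1 expr1n.
by rewrite mxE ji normr0 expr0n.
Qed.

Lemma sqnorm_unitary n (W : 'M[C]_n) v :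
  adjmx W *m W = 1%:M -> sqnorm (W *m v) = sqnorm v.
Proof. by move=> WU; rewrite /sqnorm adjmxM -mulmxA (mulmxA _ W) WU mul1mx. Qed.

Lemma qform1 n (v : 'cV[C]_n) : qform 1%:M v = sqnorm v.
Proof. by rewrite /qform mulmx1. Qed.

Lemma qformD n (A B : 'M[C]_n) v : qform (A + B) v = qform A v + qform B v.
Proof. by rewrite /qform mulmxDr mulmxDl mxE. Qed.

Lemma qformB n (A B : 'M[C]_n) v : qform (A - B) v = qform A v - qform B v.
Proof. by rewrite qformD /qform mulmxN mulNmx !mxE. Qed.

Lemma qformZ n a (A : 'M[C]_n) v : qform (a *: A) v = a * qform A v.
Proof. by rewrite /qform -scalemxAr -scalemxAl mxE. Qed.

Lemma qform_sum n I (r : seq I) (F : I -> 'M[C]_n) v :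
  qform (\sum_(i <- r) F i) v = \sum_(i <- r) qform (F i) v.
Proof. by rewrite /qform mulmx_sumr mulmx_suml summxE. Qed.

Lemma qform_conj n (A W : 'M[C]_n) v : qform (adjmx W *m A *m W) v = qform A (W *m v).
Proof. by rewrite /qform adjmxM !mulmxA. Qed.

Lemma qform_delta n (X W : 'M[C]_n) j :
  qform X (W *m delta_mx j 0) = (adjmx W *m X *m W) j j.
Proof. by rewrite -qform_conj /qform adjmx_delta -rowE -colE !mxE. Qed.

Lemma mxtrace_conjE n (X W : 'M[C]_n) :
  \tr (adjmx W *m X *m W) = \sum_j qform X (W *m delta_mx j 0).
Proof. by apply: eq_bigr => j _; rewrite qform_delta. Qed.

Lemma qform_psd n (A : 'M[C]_n) v : psd A -> 0 <= qform A v.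
Proof. by case=> _; apply. Qed.

Lemma psd_mxtrace_conj_ge0 n (A W : 'M[C]_n) : psd A -> 0 <= \tr (adjmx W *m A *m W).
Proof. by move=> psdA; rewrite mxtrace_conjE; apply: sumr_ge0 => j _; apply: qform_psd. Qed.

Lemma psd_rank1 n (v : 'cV[C]_n) : psd (v *m adjmx v).
Proof.
split=> [|u]; first by rewrite adjmxM adjmxK.
rewrite -/(qform _ _); suff -> : qform (v *m adjmx v) u = sqnorm (adjmx v *m u).
  exact: sqnorm_ge0.
by rewrite /qform /sqnorm adjmxM adjmxK !mulmxA.
Qed.

Lemma psd_proj n (A : 'M[C]_n) : adjmx A = A -> A *m A = A -> psd A.
Proof.
move=> Aherm Aidem; split=> // v; rewrite -/(qform _ _).
suff -> : qform A v = sqnorm (A *m v) by exact: sqnorm_ge0.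
by rewrite /sqnorm adjmxM Aherm -mulmxA (mulmxA A) Aidem mulmxA.
Qed.

Lemma mx0_cV n (A : 'M[C]_n) : (forall v : 'cV[C]_n, A *m v = 0) -> A = 0.
Proof.
move=> Av0; apply/matrixP => a b; have := Av0 (delta_mx b 0).
by rewrite -colE => /matrixP/(_ a 0); rewrite !mxE.
Qed.

End QuadraticForm.

Section Spectral.
Variable C : archiClosedFieldType.

Lemma herm_spectral n (A : 'M[C]_n) : adjmx A = A ->
  exists W (d : 'rV[C]_n), [/\ W *m adjmx W = 1%:M, adjmx W *m W = 1%:M
                             & A = adjmx W *m diag_mx d *m W].
Proof.
move=> Aherm.
have /orthomx_spectralP eqA : A \is normalmx.
  by apply/hermitian_normalmx/is_hermitianmxP; rewrite expr0 scale1r -adjmx_tr Aherm.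
have WU : spectralmx A *m adjmx (spectralmx A) = 1%:M.
  by rewrite adjmx_tr; apply/unitarymxP/spectral_unitarymx.
exists (spectralmx A), (spectral_diag A); split=> //; first exact: mulmx1C.
by rewrite {1}eqA invmx_unitary ?spectral_unitarymx // adjmx_tr.
Qed.

Lemma qform_diag n (d : 'rV[C]_n) u : qform (diag_mx d) u = \sum_j d 0 j * `|u j 0| ^+ 2.
Proof.
rewrite /qform mul_mx_diag !mxE; apply: eq_bigr => j _.
by rewrite !mxE normCKC mulrAC mulrC.
Qed.

Lemma psd_spectral n (A : 'M[C]_n) : psd A ->
  exists W (d : 'rV[C]_n), [/\ W *m adjmx W = 1%:M, adjmx W *m W = 1%:M,
                              A = adjmx W *m diag_mx d *m W & forall j, 0 <= d 0 j].
Proof.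
case=> Aherm Apos; have [W [d [WU UW AE]]] := herm_spectral Aherm.
exists W, d; split=> // j; have := Apos (adjmx W *m delta_mx j 0).
rewrite -[X in 0 <= X]/(qform A _) AE qform_conj mulmxA WU mul1mx qform_diag.
rewrite (bigD1 j) //= big1 ?addr0 => [|i /negbTE ij].
  by rewrite mxE !eqxx normr1 expr1n mulr1.
by rewrite mxE ij normr0 expr0n mulr0.
Qed.

Lemma qform_spectral n (W : 'M[C]_n) d v :
  qform (adjmx W *m diag_mx d *m W) v = \sum_j d 0 j * `|(W *m v) j 0| ^+ 2.
Proof. by rewrite qform_conj qform_diag. Qed.

Lemma mxtrace_spectral n (W : 'M[C]_n) d :
  W *m adjmx W = 1%:M -> \tr (adjmx W *m diag_mx d *m W) = \sum_j d 0 j.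
Proof. by move=> WU; rewrite mxtrace_mulC mulmxA WU mul1mx mxtrace_diag. Qed.

Lemma psd_qform_eq0 n (A : 'M[C]_n) v : psd A -> qform A v = 0 -> A *m v = 0.
Proof.
move=> psdA; have [W [d [_ _ AE d_ge0]]] := psd_spectral psdA.
rewrite {1}AE qform_spectral => /eqP; rewrite psumr_eq0 => [/allP dWv0|j _]; last first.
  by rewrite mulr_ge0 ?exprn_ge0.
suff dWv : diag_mx d *m (W *m v) = 0 by rewrite AE -!mulmxA dWv mulmx0.
apply/matrixP=> i j; rewrite ord1 mul_diag_mx mxE [RHS]mxE.
have := dWv0 i (mem_index_enum i); rewrite implyTb mulf_eq0 sqrf_eq0 normr_eq0.
by case/orP=> /eqP ->; rewrite ?mul0r ?mulr0.
Qed.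

(* [c = (1 + \sum_j d_j^-1)^-1] lies below every eigenvalue [d_j]; these are
   positive as [A] is invertible. *)
Lemma psd_unit_coercive n (A : 'M[C]_n) : psd A -> A \in unitmx ->
  exists c, [/\ 0 < c, c <= 1 & forall v, c * sqnorm v <= qform A v].
Proof.
move=> psdA Aunit; have [W [d [WU UW AE d_ge0]]] := psd_spectral psdA.
have d_gt0 j : 0 < d 0 j.
  rewrite lt_def d_ge0 andbT; apply/eqP => dj0.
  have Aej : A *m (adjmx W *m (delta_mx j 0 : 'cV[C]_n)) = 0.
    rewrite AE -!mulmxA (mulmxA W) WU mul1mx mul_diag_mx.
    suff -> : \matrix_(i, l) (d 0 i * (delta_mx j 0 : 'cV[C]_n) i l) = 0 by rewrite mulmx0.
    by apply/matrixP=> a b; rewrite !mxE; case: eqP => [->|] /=; rewrite ?dj0 ?mul0r ?mulr0.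
  have : delta_mx j 0 = 0 :> 'cV[C]_n.
    by rewrite -[delta_mx j 0]mul1mx -WU -mulmxA -[adjmx W *m _](mulKmx Aunit) Aej !mulmx0.
  by move/matrixP/(_ j 0); rewrite !mxE !eqxx => /eqP; rewrite oner_eq0.
have sum_ge0 : 0 <= \sum_j (d 0 j)^-1 by apply: sumr_ge0 => j _; rewrite invr_ge0 ltW.
have s1_gt0 : 0 < 1 + \sum_j (d 0 j)^-1 by rewrite ltr_wpDr.
exists (1 + \sum_j (d 0 j)^-1)^-1; split; rewrite ?invr_gt0 ?invf_le1 ?lerDl // => v.
rewrite AE qform_spectral -(sqnorm_unitary v UW) sqnormE mulr_sumr.
apply: ler_sum => j _; rewrite ler_wpM2r ?exprn_ge0 //.
rewrite -[d 0 j]invrK lef_pV2 ?posrE ?invr_gt0 ?ltr_wpDr //.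
by rewrite (bigD1 j) //= addrCA lerDl addr_ge0 // sumr_ge0 // => i _; rewrite invr_ge0 ltW.
Qed.

Lemma psd_sqnorm_mul_le n (A : 'M[C]_n) v : psd A -> sqnorm (A *m v) <= \tr A * qform A v.
Proof.
move=> psdA; have [W [d [WU UW AE d_ge0]]] := psd_spectral psdA.
have WadjU : adjmx (adjmx W) *m adjmx W = 1%:M by rewrite adjmxK.
rewrite {1}AE -!mulmxA sqnorm_unitary // {1 2}AE mxtrace_spectral //.
rewrite qform_spectral sqnormE mulr_sumr; apply: ler_sum => j _.
rewrite mul_diag_mx mxE normrM exprMn ger0_norm // expr2 -mulrA.
rewrite ler_wpM2r ?mulr_ge0 ?exprn_ge0 //.
by rewrite (bigD1 j) //= lerDl; apply: sumr_ge0.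
Qed.

Lemma mxtrace_mul_psd_le n (A X : 'M[C]_n) b : psd A ->
  (forall v, qform X v <= b * sqnorm v) -> \tr (X *m A) <= b * \tr A.
Proof.
move=> psdA Xb; have [W [d [WU UW AE d_ge0]]] := psd_spectral psdA.
rewrite {2}AE mxtrace_spectral // AE !mulmxA mxtrace_mulC !mulmxA.
rewrite mxtrace_mulC mul_diag_mx /mxtrace mulr_sumr; apply: ler_sum => j _.
rewrite mxE mulrC ler_wpM2r //.
have := Xb (adjmx W *m delta_mx j 0).
by rewrite qform_delta adjmxK sqnorm_unitary ?adjmxK // sqnorm_delta mulr1 -mulmxA.
Qed.

End Spectral.

Section Support.
Variable C : archiClosedFieldType.
Local Notation orth U := (orthomx Num.conj (mx_of_hermitian (hermitian1mx _)) U).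

Lemma perpE n (U : 'M[C]_n) : perp U = orth U.
Proof. by rewrite /perp /orthomx /= mul1mx map_trmx. Qed.

Lemma suppE n (X : 'M[C]_n) : (supp X :=: map_mx Num.conj X)%MS.
Proof.
rewrite /supp; have -> : kerS X = perp (map_mx Num.conj X).
  by rewrite /kerS /perp -map_mx_comp (map_mx_id (@conjCK _)).
by rewrite !perpE; apply: ortho_id.
Qed.

Lemma supp_herm n (X : 'M[C]_n) : adjmx X = X -> (supp X :=: X^T)%MS.
Proof.
move=> Xherm; suff <- : map_mx Num.conj X = X^T by exact: suppE.
by rewrite -[X in X^T]Xherm /adjmx trmxK.
Qed.

Lemma mxrank_supp n (X : 'M[C]_n) : \rank (supp X) = \rank X.
Proof. by rewrite suppE mxrank_map. Qed.

Lemma supp_subP n (A B : 'M[C]_n) :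
  (forall v : 'cV[C]_n, B *m v = 0 -> A *m v = 0) <-> (supp A <= supp B)%MS.
Proof.
rewrite /supp !perpE submx_ortho /kerS; split=> [kerBA|kerAB v Bv].
  apply/row_subP => i; rewrite sub_kermx; apply/eqP.
  have Bi : B *m (row i (kermx B^T))^T = 0.
    by apply: trmx_inj; rewrite trmx_mul trmxK trmx0; apply/eqP; rewrite -sub_kermx row_sub.
  by have /(congr1 trmx) := kerBA _ Bi; rewrite trmx_mul trmxK trmx0.
have : (v^T <= kermx B^T)%MS by rewrite sub_kermx -trmx_mul Bv trmx0.
move/submx_trans/(_ kerAB); rewrite sub_kermx -trmx_mul => /eqP/(congr1 trmx).
by rewrite trmxK trmx0.
Qed.

Lemma supp_full n (X : 'M[C]_n) : (supp X == 1%:M)%MS = (\rank X == n).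
Proof.
apply/idP/idP => [/eqmx_rank|/eqP rX]; first by rewrite mxrank_supp mxrank1 => ->.
by rewrite /eqmx submx1 /= -(mxrank_leqif_sup (submx1 _)) mxrank_supp rX mxrank1.
Qed.

End Support.

Section HilbertSchmidt.
Variable C : archiClosedFieldType.

Definition hsnorm2 n (X : 'M[C]_n) : C := \tr (adjmx X *m X).

Lemma hsnorm2E n (X : 'M[C]_n) : hsnorm2 X = \sum_(i < n) \sum_(j < n) `|X i j| ^+ 2.
Proof.
rewrite /hsnorm2 /mxtrace exchange_big; apply: eq_bigr => j _; rewrite mxE.
by apply: eq_bigr => i _; rewrite adjmxE normCKC.
Qed.

Lemma hsnorm2_ge0 n (X : 'M[C]_n) : 0 <= hsnorm2 X.
Proof. by rewrite hsnorm2E; do 2!(apply: sumr_ge0 => ? _); apply: exprn_ge0. Qed.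

Lemma hsnorm_ge0 n (X : 'M[C]_n) : 0 <= hsnorm X.
Proof. by rewrite /hsnorm sqrtC_ge0 -hsnorm2E hsnorm2_ge0. Qed.

Lemma hsnorm_lt n (X : 'M[C]_n) e : 0 < e -> hsnorm2 X < e ^+ 2 -> hsnorm X < e.
Proof.
move=> e_gt0 X_lt; rewrite -(@ltr_pXn2r _ 2) ?nnegrE ?hsnorm_ge0 ?ltW //.
by rewrite /hsnorm sqrtCK -hsnorm2E.
Qed.

Lemma normr_mxtrace_le_hsnorm n (X : 'M[C]_n) : `|\tr X| <= n%:R * hsnorm X.
Proof.
apply: le_trans (ler_norm_sum _ _ _) _.
rewrite mulr_natl -[n in _ *+ n]card_ord -sumr_const; apply: ler_sum => i _.
rewrite /hsnorm -(sqrCK (normr_ge0 (X i i))) -hsnorm2E.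
rewrite ler_sqrtC ?nnegrE ?exprn_ge0 ?hsnorm2_ge0 //.
rewrite hsnorm2E (bigD1 i) //= (bigD1 i) //= -addrA lerDl.
by rewrite addr_ge0 //; do ?(apply: sumr_ge0 => ? _); apply: exprn_ge0.
Qed.

End HilbertSchmidt.

(* From [1 - (1 - c)^k = c * \sum_(i < k) (1 - c)^i >= k c (1 - c)^k]. *)
Lemma expr_compl_lt (C : archiNumFieldType) (c e : C) : 0 < c -> c <= 1 -> 0 < e ->
  exists k : nat, (1 - c) ^+ k < e.
Proof.
move=> c_gt0 c_le1 e_gt0; set d := 1 - c.
have d_ge0 : 0 <= d by rewrite subr_ge0.
have d_le1 : d <= 1 by rewrite lerBlDr lerDl ltW.
have kcd_le1 k : k%:R * c * d ^+ k <= 1.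
  have dXE := subrXX 1 d k.
  have cE : 1 - d = c by rewrite /d opprB addrC subrK.
  rewrite expr1n cE in dXE.
  suff : c * (k%:R * d ^+ k) <= 1 - d ^+ k.
    by rewrite mulrA (mulrC c) => /le_trans; apply; rewrite lerBlDr lerDl exprn_ge0.
  rewrite dXE; apply: ler_wpM2l; first exact: ltW.
  rewrite mulr_natl -[k in _ *+ k]card_ord -sumr_const; apply: ler_sum => i _.
  by rewrite expr1n mul1r; apply: ler_wiXn2l => //; exact: ltnW.
have ce_inv_ge0 : 0 <= (c * e)^-1 by rewrite invr_ge0 ltW // mulr_gt0.
exists (Num.bound (c * e)^-1); set k := Num.bound _.
have k_gt : (c * e)^-1 < k%:R := archi_boundP ce_inv_ge0.
rewrite (real_ltNge (ger0_real (exprn_ge0 k d_ge0)) (gtr0_real e_gt0)).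
apply/negP => e_le.
have : k%:R * c * e <= 1.
  by apply: le_trans (kcd_le1 k); apply: ler_wpM2l => //; rewrite mulr_ge0 ?ltW.
rewrite -mulrA -ler_pdivlMr ?mulr_gt0 // div1r => /(lt_le_trans k_gt).
by rewrite ltxx.
Qed.

Section Kraus.
Variables (C : archiClosedFieldType) (n k : nat) (M : 'I_k -> 'M[C]_n).
Local Notation T := (kraus_op M).
Local Notation Tdual := (kraus_dual M).

Lemma kraus_dual_herm A : adjmx A = A -> adjmx (Tdual A) = Tdual A.
Proof.
move=> Aherm; rewrite adjmx_sum; apply: eq_bigr => i _.
by rewrite !adjmxM adjmxK Aherm mulmxA.
Qed.

Lemma kraus_dual_qform A v : qform (Tdual A) v = \sum_i qform A (M i *m v).
Proof. by rewrite qform_sum; apply: eq_bigr => i _; rewrite qform_conj. Qed.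

Lemma kraus_dual_psd A : psd A -> psd (Tdual A).
Proof.
move=> psdA; split; first by apply: kraus_dual_herm; case: psdA.
by move=> v; rewrite -/(qform _ _) kraus_dual_qform sumr_ge0 // => i _; apply: qform_psd.
Qed.

Lemma kraus_dualB A B : Tdual (A - B) = Tdual A - Tdual B.
Proof. by rewrite -sumrB; apply: eq_bigr => i _; rewrite mulmxBr mulmxBl. Qed.

Lemma kraus_dualZ a A : Tdual (a *: A) = a *: Tdual A.
Proof. by rewrite scaler_sumr; apply: eq_bigr => i _; rewrite -scalemxAr -scalemxAl. Qed.

Lemma kraus_dual1 : cptp M -> Tdual 1%:M = 1%:M.
Proof. by move=> cptpM; rewrite -[RHS]cptpM; apply: eq_bigr => i _; rewrite mulmx1. Qed.

Lemma kraus_dual_ker A (v : 'cV[C]_n) : psd A ->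
  Tdual A *m v = 0 <-> forall i, A *m (M i *m v) = 0.
Proof.
move=> psdA; split=> [Av0 i|AMv0]; last first.
  by rewrite /kraus_dual mulmx_suml big1 // => i _; rewrite -!mulmxA AMv0 mulmx0.
apply: psd_qform_eq0 => //; move: (erefl (qform (Tdual A) v)).
rewrite {1}/qform -mulmxA Av0 mulmx0 mxE kraus_dual_qform => /esym/psumr_eq0P.
by apply=> // j _; apply: qform_psd.
Qed.

Lemma iter_kraus_dualZ m a A : iter m Tdual (a *: A) = a *: iter m Tdual A.
Proof. by elim: m => //= m ->; rewrite kraus_dualZ. Qed.

Lemma iter_kraus_dual_psd m A : psd A -> psd (iter m Tdual A).
Proof. by move=> psdA; elim: m => //= m; apply: kraus_dual_psd. Qed.

Lemma iter_kraus_dual_qform_le A B : (forall v, qform A v <= qform B v) ->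
  forall m v, qform (iter m Tdual A) v <= qform (iter m Tdual B) v.
Proof.
move=> AB; elim=> //= m IHm v; rewrite !kraus_dual_qform.
by apply: ler_sum => i _; apply: IHm.
Qed.

Lemma kraus_op_psd rho : psd rho -> psd (T rho).
Proof.
case=> rho_herm rho_pos; split.
  by rewrite adjmx_sum; apply: eq_bigr => i _; rewrite !adjmxM adjmxK rho_herm mulmxA.
move=> v; rewrite -/(qform _ _) qform_sum sumr_ge0 // => i _.
by rewrite -{1}[M i]adjmxK qform_conj; apply: rho_pos.
Qed.

Lemma mxtrace_mul_kraus_op A rho : \tr (A *m T rho) = \tr (Tdual A *m rho).
Proof.
rewrite mulmx_sumr mulmx_suml !raddf_sum; apply: eq_bigr => i _ /=.
by rewrite !mulmxA mxtrace_mulC !mulmxA.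
Qed.

Lemma kraus_op_mxtrace rho : cptp M -> \tr (T rho) = \tr rho.
Proof.
by move=> cptpM; rewrite -[T rho]mul1mx mxtrace_mul_kraus_op kraus_dual1 // mul1mx.
Qed.

Lemma mxtrace_mul_iter_kraus_op m A rho :
  \tr (A *m iter m T rho) = \tr (iter m Tdual A *m rho).
Proof.
elim: m A => //= m IHm A; rewrite mxtrace_mul_kraus_op IHm.
by rewrite -iterSr.
Qed.

Lemma iter_kraus_op_psd m rho : psd rho -> psd (iter m T rho).
Proof. by move=> psd_rho; elim: m => //= m; apply: kraus_op_psd. Qed.

Lemma iter_kraus_op_mxtrace m rho : cptp M -> \tr (iter m T rho) = \tr rho.
Proof. by move=> cptpM; elim: m => //= m <-; apply: kraus_op_mxtrace. Qed.

End Kraus.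

Section Projection.
Variables (C : archiClosedFieldType) (n : nat) (S P : 'M[C]_n).
Hypothesis P_S : orth_proj S P.
Local Notation Q := (1%:M - P).

Lemma proj_idem : P *m P = P. Proof. by case: P_S. Qed.
Lemma proj_herm : adjmx P = P. Proof. by case: P_S => _ []. Qed.
Lemma proj_compl_herm : adjmx Q = Q. Proof. by rewrite adjmxB adjmx1 proj_herm. Qed.
Lemma proj_mul_compl : P *m Q = 0. Proof. by rewrite mulmxBr mulmx1 proj_idem subrr. Qed.
Lemma compl_mul_proj : Q *m P = 0. Proof. by rewrite mulmxBl mul1mx proj_idem subrr. Qed.
Lemma proj_compl_idem : Q *m Q = Q. Proof. by rewrite mulmxBl mul1mx proj_mul_compl subr0. Qed.
Lemma proj_psd : psd P. Proof. exact: psd_proj proj_herm proj_idem. Qed.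
Lemma proj_compl_psd : psd Q. Proof. exact: psd_proj proj_compl_herm proj_compl_idem. Qed.

Lemma supp_sub_proj X : adjmx X = X -> (supp X <= S)%MS = (P *m X == X).
Proof.
case: P_S => _ [_ /eqmxP PS] Xherm; rewrite (supp_herm Xherm) -PS.
apply/idP/eqP => [/submxP[D XE]|<-]; last by rewrite trmx_mul submxMl.
by rewrite -[X]trmxK XE trmx_mul trmxK mulmxA proj_idem.
Qed.

Lemma psd_mxtrace_proj_eq0 sg : psd sg -> \tr (P *m sg) = 0 -> sg *m P = 0.
Proof.
move=> psd_sg trP0.
have : \tr (adjmx P *m sg *m P) = 0 by rewrite proj_herm mxtrace_mulC mulmxA proj_idem.
rewrite mxtrace_conjE => /psumr_eq0P sgP0; apply/matrixP => a b.
have := psd_qform_eq0 psd_sg (sgP0 (fun j _ => qform_psd _ psd_sg) b isT).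
by rewrite mulmxA -colE => /matrixP/(_ a 0); rewrite !mxE.
Qed.

(* With [Y = sg Q]: [sg - P sg P = Y^* + P Y], and [tr (Y^* Y) <= tr sg * tr (Q sg)]. *)
Lemma hsnorm2_sub_proj_le sg : psd sg -> \tr sg = 1 ->
  hsnorm2 (sg - P *m sg *m P) <= 2%:R * \tr (Q *m sg).
Proof.
move=> psd_sg tr_sg; have sg_herm : adjmx sg = sg by case: psd_sg.
set Y := sg *m Q.
have YP : Y *m P = 0 by rewrite /Y -mulmxA compl_mul_proj mulmx0.
have PYadj : P *m adjmx Y = 0.
  by rewrite /Y adjmxM proj_compl_herm mulmxA proj_mul_compl mul0mx.
have XE : sg - P *m sg *m P = adjmx Y + P *m Y.
  rewrite /Y adjmxM proj_compl_herm sg_herm mulmxBl mulmxBr mul1mx mulmx1.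
  by rewrite [P *m (_ - _)]mulmxBr mulmxA addrA subrK.
have hsE : hsnorm2 (sg - P *m sg *m P) = \tr (Y *m adjmx Y) + \tr (adjmx Y *m P *m Y).
  rewrite /hsnorm2 XE adjmxD adjmxK adjmxM proj_herm mulmxDl !mulmxDr.
  rewrite mulmxA YP mul0mx addr0 -!mulmxA PYadj !mulmx0 add0r (mulmxA P) proj_idem.
  by rewrite mxtraceD mulmxA.
have trYY : \tr (adjmx Y *m Y) <= \tr (Q *m sg).
  have -> : adjmx Y *m Y = adjmx Y *m 1%:M *m Y by rewrite mulmx1.
  rewrite mxtrace_conjE.
  have -> : \tr (Q *m sg) = \tr (adjmx Q *m sg *m Q).
    by rewrite proj_compl_herm [RHS]mxtrace_mulC mulmxA proj_compl_idem.
  rewrite mxtrace_conjE; apply: ler_sum => j _; rewrite qform1 /Y -mulmxA.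
  by have := psd_sqnorm_mul_le (Q *m delta_mx j 0) psd_sg; rewrite tr_sg mul1r.
have trYPY : \tr (adjmx Y *m P *m Y) <= \tr (adjmx Y *m Y).
  have -> : \tr (adjmx Y *m P *m Y) = \tr (adjmx Y *m Y) - \tr (adjmx Y *m Q *m Y).
    by rewrite mulmxBr mulmx1 mulmxBl raddfB /= opprB addrC subrK.
  by rewrite lerBlDr lerDl psd_mxtrace_conj_ge0 //; exact: proj_compl_psd.
rewrite hsE mxtrace_mulC mulr_natl mulr2n lerD //; exact: le_trans trYY.
Qed.

End Projection.

Lemma homo_bounded_plateau (f : nat -> nat) b :
  (forall m, (f m <= f m.+1)%N) -> (forall m, (f m <= b)%N) ->
  exists2 m, (m <= b)%N & f m = f m.+1.
Proof.
move=> f_mono f_le.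
have [/existsP[m /eqP fm]|/existsPn f_strict] := boolP [exists m : 'I_b.+1, f m == f m.+1].
  by exists m => //; rewrite -ltnS.
have id_le_f j : (j <= b.+1)%N -> (j <= f j)%N.
  elim: j => // j IHj j_lt; apply: leq_ltn_trans (IHj (ltnW j_lt)) _.
  by rewrite ltn_neqAle f_mono andbT; apply: (f_strict (Ordinal j_lt)).
by have := leq_trans (id_le_f _ (leqnn _)) (f_le b.+1); rewrite ltnn.
Qed.

Lemma kermx_neq0 (F : fieldType) n (A : 'M[F]_n) : (\rank A < n)%N ->
  exists2 w : 'cV[F]_n, w != 0 & A *m w = 0.
Proof.
move=> rA; have : kermx A^T != 0.
  by rewrite -mxrank_eq0 mxrank_ker mxrank_tr subn_eq0 -ltnNge.
case/rowV0Pn => u; rewrite sub_kermx => /eqP uA u0; exists u^T.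
  by apply: contraNneq u0 => uT0; rewrite -[u]trmxK uT0 trmx0.
by apply: trmx_inj; rewrite trmx_mul trmxK uA trmx0.
Qed.

Section Invariance.
Variables (C : archiClosedFieldType) (n k : nat) (M : 'I_k -> 'M[C]_n) (S P : 'M[C]_n).
Hypotheses (P_S : orth_proj S P) (M_inv : invariant_subspace M S).
Local Notation Q := (1%:M - P).

(* Feed the rank-one states [w w^*], [w = P x], through the invariance hypothesis. *)
Lemma compl_kraus_proj i : Q *m M i *m P = 0.
Proof.
apply: mx0_cV => x; rewrite -mulmxA; set w := P *m x.
have rho_psd := psd_rank1 w.
have rho_S : (supp (w *m adjmx w) <= S)%MS.
  by rewrite (supp_sub_proj P_S) ?(proj1 rho_psd) // /w !mulmxA (proj_idem P_S).
have := M_inv rho_psd rho_S; rewrite (supp_sub_proj P_S); last first.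
  by case: (kraus_op_psd M rho_psd).
move/eqP => PT; have QT : Q *m kraus_op M (w *m adjmx w) = 0.
  by rewrite mulmxBl mul1mx PT subrr.
have : \tr (Q *m kraus_op M (w *m adjmx w) *m Q) = \sum_j sqnorm (Q *m M j *m w).
  rewrite /kraus_op mulmx_sumr mulmx_suml raddf_sum; apply: eq_bigr => j _.
  rewrite /sqnorm -trace_mx11 [RHS]mxtrace_mulC; congr (\tr _).
  by rewrite !adjmxM (proj_compl_herm P_S) !mulmxA.
rewrite QT mul0mx mxtrace0 => /esym/psumr_eq0P QMw0.
by apply: sqnorm_eq0; exact: (QMw0 (fun j _ => sqnorm_ge0 _) i).
Qed.

Lemma kraus_proj i : M i *m P = P *m M i *m P.
Proof.
have := compl_kraus_proj i; rewrite !mulmxBl mul1mx => /eqP.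
by rewrite subr_eq0 => /eqP.
Qed.

End Invariance.

Lemma density_rank1 (C : archiClosedFieldType) n (w : 'cV[C]_n) : w != 0 ->
  density ((sqnorm w)^-1 *: (w *m adjmx w)).
Proof.
move=> w0; have nw_gt0 : 0 < sqnorm w.
  by rewrite lt_def sqnorm_ge0 andbT; apply: contra w0 => /eqP/sqnorm_eq0 ->.
split; last by rewrite linearZ /= mxtrace_mulC trace_mx11 mulVf ?gt_eqF.
have [wwherm wwpos] := psd_rank1 w.
split=> [|v]; first by rewrite adjmxZ wwherm geC0_conj // invr_ge0 sqnorm_ge0.
by rewrite -/(qform _ _) qformZ mulr_ge0 ?invr_ge0 ?sqnorm_ge0 //; apply: wwpos.
Qed.

Section DualChain.
Variables (C : archiClosedFieldType) (n k : nat) (M : 'I_k -> 'M[C]_n) (S P : 'M[C]_n).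
Hypotheses (M_cptp : cptp M) (P_S : orth_proj S P) (M_inv : invariant_subspace M S).
Local Notation T := (kraus_op M).
Local Notation Tdual := (kraus_dual M).
Local Notation Q := (1%:M - P).
Local Notation Pdual m := (iter m Tdual P).
Local Notation Qdual m := (iter m Tdual Q).
Implicit Type v : 'cV[C]_n.

Lemma iter_dual_proj_psd m : psd (Pdual m).
Proof. exact: iter_kraus_dual_psd (proj_psd P_S). Qed.

(* [P = \sum_i P M_i^* M_i] and [P M_i^* = P M_i^* P] by invariance. *)
Lemma ker_dual_proj v : Tdual P *m v = 0 -> P *m v = 0.
Proof.
move/(kraus_dual_ker _ _ (proj_psd P_S)) => PMv0.
rewrite -[v]mul1mx -M_cptp mulmx_suml mulmx_sumr big1 // => i _.
have := congr1 (@adjmx C n n) (kraus_proj P_S M_inv i).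
rewrite !adjmxM (proj_herm P_S) mulmxA => PM_P.
by rewrite !mulmxA PM_P -!mulmxA PMv0 !mulmx0.
Qed.

Lemma ker_iter_dual_proj_succ m v : Pdual m.+1 *m v = 0 -> Pdual m *m v = 0.
Proof.
elim: m v => [|m IHm] v; first exact: ker_dual_proj.
move/(kraus_dual_ker M v (iter_dual_proj_psd m.+1)) => Mv0.
by apply/(kraus_dual_ker M v (iter_dual_proj_psd m)) => i; apply/IHm/Mv0.
Qed.

Lemma ker_iter_dual_proj_le j m v : (j <= m)%N -> Pdual m *m v = 0 -> Pdual j *m v = 0.
Proof.
move/subnK <-; elim: (m - j)%N => // d IHd.
by rewrite addSn => /ker_iter_dual_proj_succ.
Qed.

Lemma ker_iter_dual_proj_stable m :
  (forall v, Pdual m *m v = 0 -> Pdual m.+1 *m v = 0) ->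
  forall j v, Pdual m *m v = 0 -> Pdual (j + m) *m v = 0.
Proof.
move=> stable_m; suff step j v : Pdual (j + m) *m v = 0 -> Pdual (j + m).+1 *m v = 0.
  by elim=> // j IHj v /IHj; rewrite addSn; apply: step.
elim: j v => [|j IHj] v; first exact: stable_m.
rewrite addSn => /(kraus_dual_ker M v (iter_dual_proj_psd (j + m))) Mv0.
by apply/(kraus_dual_ker M v (iter_dual_proj_psd (j + m).+1)) => i; apply/IHj/Mv0.
Qed.

Lemma supp_iter_dual_proj_mono m : (supp (Pdual m) <= supp (Pdual m.+1))%MS.
Proof. by apply/supp_subP => v; apply: ker_iter_dual_proj_succ. Qed.

Lemma rank_iter_dual_proj_mono m : (\rank (Pdual m) <= \rank (Pdual m.+1))%N.
Proof.
by rewrite -mxrank_supp -(mxrank_supp (Pdual m.+1)) mxrankS ?supp_iter_dual_proj_mono.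
Qed.

Lemma supp_iter_dual_proj_stable m : \rank (Pdual m) = \rank (Pdual m.+1) ->
  forall j, (supp (Pdual (j + m)) <= supp (Pdual m))%MS.
Proof.
move=> r_eq j; apply/supp_subP; apply: ker_iter_dual_proj_stable; apply/supp_subP.
by rewrite -(mxrank_leqif_sup (supp_iter_dual_proj_mono m)).2 !mxrank_supp r_eq.
Qed.

(* The ranks are nondecreasing and bounded by [n], so they stall by step [n]. *)
Lemma supp_iter_dual_proj_le_n j : (supp (Pdual j) <= supp (Pdual n))%MS.
Proof.
have [m0 m0_le r_eq] :=
  homo_bounded_plateau rank_iter_dual_proj_mono (fun m => rank_leq_row _).
apply/supp_subP => v /(ker_iter_dual_proj_le m0_le) v_m0.
have [j_le|/ltnW m0_le_j] := leqP j m0; first exact: ker_iter_dual_proj_le v_m0.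
move: (supp_iter_dual_proj_stable r_eq (j - m0)); rewrite subnK // => /supp_subP.
exact.
Qed.

Lemma supp_chain_full_iff :
  (exists N : nat,
     (forall m : nat, (m < N)%N -> (supp (Pdual m) < supp (Pdual m.+1))%MS) /\
     (supp (Pdual N) == 1%:M)%MS) <-> \rank (Pdual n) = n.
Proof.
have rank_le_supp j m : (supp (Pdual j) <= supp (Pdual m))%MS ->
    (\rank (Pdual j) <= \rank (Pdual m))%N.
  by move/mxrankS; rewrite !mxrank_supp.
split=> [[N [_]]|r_n].
  rewrite supp_full => /eqP r_N; apply/eqP; rewrite eqn_leq rank_leq_row /=.
  by rewrite -{1}r_N rank_le_supp ?supp_iter_dual_proj_le_n.
have full_n : exists N, \rank (Pdual N) == n by exists n; apply/eqP.
case: (ex_minnP full_n) => N /eqP r_N N_min; exists N; split; last by rewrite supp_full r_N.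
move=> m m_lt; rewrite ltmxErank supp_iter_dual_proj_mono /= !mxrank_supp.
rewrite ltn_neqAle rank_iter_dual_proj_mono andbT; apply/eqP => r_eq.
have : (N <= m)%N.
  apply/N_min; rewrite eqn_leq rank_leq_row /= -{1}r_N rank_le_supp //.
  by rewrite -(subnK (ltnW m_lt)) supp_iter_dual_proj_stable.
by rewrite leqNgt m_lt.
Qed.

Lemma iter_dual_compl m : Qdual m = 1%:M - Pdual m.
Proof. by elim: m => //= m ->; rewrite kraus_dualB kraus_dual1. Qed.

Lemma iter_dual_compl_psd m : psd (Qdual m).
Proof. exact: iter_kraus_dual_psd (proj_compl_psd P_S). Qed.

Lemma iter_dual_compl_proj m : Qdual m *m P = 0.
Proof.
elim: m => [|m IHm]; first exact: compl_mul_proj P_S.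
rewrite /= /kraus_dual mulmx_suml big1 // => i _.
rewrite -mulmxA (kraus_proj P_S M_inv) !mulmxA -(mulmxA (adjmx (M i))) IHm.
by rewrite mulmx0 !mul0mx.
Qed.

Lemma qform_iter_dual_compl_le m v : qform (Qdual m) v <= sqnorm v.
Proof.
rewrite iter_dual_compl qformB qform1 lerBlDr lerDl.
exact: qform_psd (iter_dual_proj_psd m).
Qed.

(* If [Pdual n >= c] then [Q (Qdual n) Q <= (1 - c) Q], and
   [Qdual (m + n) = Qdual m (Qdual n)]. *)
Lemma iter_dual_compl_geometric : \rank (Pdual n) = n ->
  exists c, [/\ 0 < c, c <= 1 & forall j m v, (j * n <= m)%N ->
                                  qform (Qdual m) v <= (1 - c) ^+ j * sqnorm v].
Proof.
move=> r_n; have P_unit : Pdual n \in unitmx by rewrite -row_full_unit /row_full r_n.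
have [c [c_gt0 c_le1 P_coer]] := psd_unit_coercive (iter_dual_proj_psd n) P_unit.
have c'_ge0 : 0 <= 1 - c by rewrite subr_ge0.
have contract v : qform (Qdual n) v <= (1 - c) * qform Q v.
  have QnE : Qdual n = adjmx Q *m Qdual n *m Q.
    have [Qn_herm _] := iter_dual_compl_psd n.
    have QnQ : Qdual n *m Q = Qdual n by rewrite mulmxBr mulmx1 iter_dual_compl_proj subr0.
    by rewrite -mulmxA QnQ -{2}Qn_herm -adjmxM QnQ Qn_herm.
  rewrite QnE qform_conj iter_dual_compl qformB qform1.
  have -> : qform Q v = sqnorm (Q *m v).
    by rewrite -qform1 -qform_conj mulmx1 (proj_compl_herm P_S) (proj_compl_idem P_S).
  by rewrite mulrBl mul1r lerB.
have step m v : qform (Qdual (m + n)) v <= (1 - c) * qform (Qdual m) v.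
  rewrite iterD -qformZ -iter_kraus_dualZ; apply: iter_kraus_dual_qform_le => u.
  by rewrite qformZ.
have iterated j m v : qform (Qdual (m + j * n)) v <= (1 - c) ^+ j * qform (Qdual m) v.
  elim: j m v => [|j IHj] m v; first by rewrite mul0n addn0 expr0 mul1r.
  rewrite mulSn addnCA addnC; apply: le_trans (step _ _) _.
  by rewrite exprS -mulrA ler_wpM2l.
exists c; split=> // j m v /subnK <-; apply: le_trans (iterated _ _ _) _.
by rewrite ler_wpM2l ?exprn_ge0 ?qform_iter_dual_compl_le.
Qed.

Lemma GAS_of_full_rank : \rank (Pdual n) = n -> GAS M P.
Proof.
move=> /iter_dual_compl_geometric[c [c_gt0 c_le1 Qdual_le]].
move=> rho [psd_rho tr_rho] eps eps_gt0.
have eps2_gt0 : 0 < eps ^+ 2 / 2%:R by rewrite divr_gt0 ?exprn_gt0.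
have [j cj_lt] := expr_compl_lt c_gt0 c_le1 eps2_gt0.
exists (j * n)%N => m m_ge; set sg := iter m T rho.
have trQ : \tr (Q *m sg) <= (1 - c) ^+ j.
  rewrite mxtrace_mul_iter_kraus_op.
  by have := mxtrace_mul_psd_le psd_rho (Qdual_le j m ^~ m_ge); rewrite tr_rho mulr1.
apply: hsnorm_lt => //; apply: le_lt_trans (hsnorm2_sub_proj_le P_S _ _) _.
- exact: iter_kraus_op_psd.
- by rewrite iter_kraus_op_mxtrace.
apply: le_lt_trans (ler_wpM2l (ler0n _ 2) trQ) _.
by rewrite mulrC -ltr_pdivlMr ?ltr0n.
Qed.

Lemma GAS_common_kernel (w : 'cV[C]_n) :
  GAS M P -> (forall m, Pdual m *m w = 0) -> w = 0.
Proof.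
move=> gas Pw0; apply/eqP; apply: contraT => w0.
have n_gt0 : (0 < n)%N by case: n w w0 {Pw0} => // w; rewrite flatmx0 eqxx.
have inv_n_gt0 : 0 < (n%:R : C)^-1 by rewrite invr_gt0 ltr0n.
have [N /(_ N (leqnn N))] := gas _ (density_rank1 w0) _ inv_n_gt0.
set sg := iter N T _.
have psd_sg : psd sg := iter_kraus_op_psd _ _ (proj1 (density_rank1 w0)).
have tr_sg : \tr sg = 1 by rewrite iter_kraus_op_mxtrace // (proj2 (density_rank1 w0)).
have sgP : sg *m P = 0.
  apply: (psd_mxtrace_proj_eq0 P_S psd_sg).
  rewrite mxtrace_mul_iter_kraus_op -scalemxAr linearZ /= mulmxA Pw0 mul0mx.
  by rewrite mxtrace0 mulr0.
rewrite -mulmxA sgP mulmx0 subr0 => sg_small.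
have n_neq0 : (n%:R : C) != 0 by rewrite pnatr_eq0 -lt0n.
have n_sg_small : n%:R * hsnorm sg < 1.
  by rewrite -[X in _ < X](mulfV n_neq0) ltr_pM2l ?ltr0n.
have := le_lt_trans (normr_mxtrace_le_hsnorm sg) n_sg_small.
by rewrite tr_sg normr1 ltxx.
Qed.

Lemma full_rank_of_GAS : GAS M P -> \rank (Pdual n) = n.
Proof.
move=> gas; apply/eqP; rewrite eqn_leq rank_leq_row leqNgt; apply/negP => r_lt.
have [w w0 Pnw0] := kermx_neq0 r_lt; apply/negP: w0; rewrite negbK.
apply/eqP/(GAS_common_kernel gas) => m.
exact: (supp_subP _ _).2 (supp_iter_dual_proj_le_n m) _ Pnw0.
Qed.

End DualChain.

Theorem corollary2 (C : archiClosedFieldType) (n k : nat)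
  (M : 'I_k -> 'M[C]_n) (S P : 'M[C]_n) :
  cptp M -> orth_proj S P -> invariant_subspace M S ->
  (GAS M P <->
   exists N : nat,
     (forall m : nat, (m < N)%N ->
        (supp (iter m (kraus_dual M) P) < supp (iter m.+1 (kraus_dual M) P))%MS) /\
     (supp (iter N (kraus_dual M) P) == 1%:M)%MS).
Proof.
move=> M_cptp P_S M_inv.
have [chain_rank rank_chain] := supp_chain_full_iff M_cptp P_S M_inv.
split=> [/(full_rank_of_GAS M_cptp P_S M_inv)/rank_chain //|].
by move/chain_rank/(GAS_of_full_rank M_cptp P_S M_inv).
Qed.
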